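(* Let $\pi=(\pi_n^{n+1}\colon X_{n+1}\to X_n)_{n\ge1}$ be an inverse sequence of continuous maps between compact metric spaces. Then the following are equivalent: (1) $\pi$ satisfies MLC(1); (2) for any $n\ge1$ and $m\ge n+1$, $\pi_n^{n+1}(X_{n+1})=\pi_n^m(X_m)$; (3) for every $n\ge1$, $\hat{X}_n=\pi_n^{n+1}(X_{n+1})$.
   Context: For $m\ge n\ge1$, $\pi_n^m\colon X_m\to X_n$ is the identity if $m=n$ and $\pi_n^{n+1}\circ\pi_{n+1}^{n+2}\circ\cdots\circ\pi_{m-1}^m$ if $m>n$. $\hat{X}_n=\bigcap_{m\ge n}\pi_n^m(X_m)$. $\pi$ satisfies MLC(1) if $\pi_n^{n+1}(X_{n+1})=\pi_n^{n+2}(X_{n+2})$ for every $n\ge1$. *)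

From HB Require Import structures.
From mathcomp Require Import all_boot all_order all_algebra.
From mathcomp Require Import all_classical all_reals all_analysis.
Unset Printing Implicit Defensive.
Local Open Scope classical_set_scope.

(* Inverse sequence, 0-indexed: p n : X (n.+1) -> X n  (paper's index n+1). *)

Fixpoint pi_comp {T : nat -> Type} (p : forall n, T n.+1 -> T n) (n k : nat)
  : T (k + n)%N -> T n :=
  match k return T (k + n)%N -> T n with
  | 0 => fun x => x
  | k'.+1 => fun x => @pi_comp T p n k' (p (k' + n)%N x)
  end.

Definition image_at {T : nat -> Type} (p : forall n, T n.+1 -> T n) (n k : nat)
  : set (T n) := range (@pi_comp T p n k).

Definition Xhat {T : nat -> Type} (p : forall n, T n.+1 -> T n) (n : nat)
  : set (T n) := \bigcap_(k in [set: nat]) image_at p n k.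

Definition MLC1 {T : nat -> Type} (p : forall n, T n.+1 -> T n) : Prop :=
  forall n, image_at p n 1 = image_at p n 2.

From HB Require Import structures.
From mathcomp Require Import all_boot all_order all_algebra.
From mathcomp Require Import all_classical all_reals all_analysis.
Local Open Scope classical_set_scope.

(* The equivalence is purely set-theoretic.  The images pi_n^m(X_m) decrease in m, and
   pi_n^(m+1)(X_(m+1)) = pi_n^m(pi_m^(m+1)(X_(m+1))); hence MLC(1) at level m
   propagates to level n by induction on m, which makes all the images equal
   to pi_n^(n+1)(X_(n+1)) and therefore equal to their intersection.
   Conversely, if that intersection is pi_n^(n+1)(X_(n+1)), then
   pi_n^(n+2)(X_(n+2)) is squeezed between the two. *)

Section ImageAt.

Variables (T : nat -> Type) (p : forall n, T n.+1 -> T n).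

Lemma image_atS_sub n k : image_at p n k.+1 `<=` image_at p n k.
Proof. by move=> x [y _ <-]; exists (p (k + n)%N y). Qed.

Lemma image_atS n k :
  image_at p n k.+1 = pi_comp p n k @` image_at p (k + n) 1.
Proof.
apply/seteqP; split => x.
  by case=> y _ <-; exists (p (k + n)%N y) => //; exists y.
by case=> y [z _ <-] <-; exists z.
Qed.

Lemma image_atSS n k :
  image_at p n k.+2 = pi_comp p n k @` image_at p (k + n) 2.
Proof.
apply/seteqP; split => x.
  by case=> y _ <-; exists (p (k + n)%N (p (k.+1 + n)%N y)) => //; exists y.
by case=> y [z _ <-] <-; exists z.
Qed.

Lemma Xhat_sub_image_at n k : Xhat p n `<=` image_at p n k.
Proof. by move=> x Xx; apply: Xx. Qed.

Lemma MLC1_image_at_eq : MLC1 p ->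
  forall n k, image_at p n k.+1 = image_at p n 1.
Proof.
move=> mlc n; elim=> // k IHk.
by rewrite image_atSS -mlc -image_atS.
Qed.

Lemma Xhat_eq_image_at1 n :
  (forall k, image_at p n k.+1 = image_at p n 1) -> Xhat p n = image_at p n 1.
Proof.
move=> img_eq; apply/seteqP; split; first exact: Xhat_sub_image_at.
move=> x img1x [|k] _; first by exists x.
by rewrite img_eq.
Qed.

Lemma Xhat_eq_image_at1_MLC1 :
  (forall n, Xhat p n = image_at p n 1) -> MLC1 p.
Proof.
move=> Xhat_eq n; apply/seteqP; split; last exact: image_atS_sub.
by rewrite -Xhat_eq; apply: Xhat_sub_image_at.
Qed.

End ImageAt.

Theorem lemma2p1 (R : realType) (X : nat -> metricType R)
  (p : forall n, X n.+1 -> X n)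
  (hcpt : forall n, compact [set: X n])
  (hcont : forall n, continuous (p n)) :
  [/\ (MLC1 p -> forall n k, (1 <= k)%N -> image_at p n 1 = image_at p n k),
      ((forall n k, (1 <= k)%N -> image_at p n 1 = image_at p n k) ->
         forall n, Xhat p n = image_at p n 1)
    & ((forall n, Xhat p n = image_at p n 1) -> MLC1 p)].
Proof.
split; last exact: Xhat_eq_image_at1_MLC1.
- by move=> mlc n [|k] // _; rewrite MLC1_image_at_eq.
- by move=> img_eq n; apply: Xhat_eq_image_at1 => k; rewrite -img_eq.
Qed.
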